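(* Let $L^x,L^y>0$, let $i\neq j$ be two boxes, each box $k\in\{i,j\}$ having center $(c^x_k,c^y_k)$, side lengths $(\ell^x_k,\ell^y_k)$ and given constants $lb^s_k>0$. Let $$Q^{lb}=\{(c_i,c_j,\ell_i,\ell_j)\in\mathbb{R}^8:\ \tfrac12\ell^s_k\le c^s_k\le L^s-\tfrac12\ell^s_k,\ \ell^s_k\ge lb^s_k\ \ \forall s\in\{x,y\},k\in\{i,j\}\}.$$ Let $E$ be the set of $(c_i,c_j,\ell_i,\ell_j,w)\in\mathbb{R}^8\times\{0,1\}^2$ with $(c_i,c_j,\ell_i,\ell_j)\in Q^{lb}$ and such that: $w=(0,0)$ implies $\mathscr{B}_i\leftarrow_y\mathscr{B}_j$; $w=(1,0)$ implies $\mathscr{B}_i\leftarrow_x\mathscr{B}_j$; $w=(1,1)$ implies $\mathscr{B}_j\leftarrow_y\mathscr{B}_i$; $w=(0,1)$ implies $\mathscr{B}_j\leftarrow_x\mathscr{B}_i$. Then $E$ equals the set of $(c_i,c_j,\ell_i,\ell_j,w)$ satisfying \begin{align*} &\tfrac12\ell^s_p\le c^s_p\le L^s-\tfrac12\ell^s_p,\quad \ell^s_p\ge lb^s_p\qquad\forall s\in\{x,y\},p\in\{i,j\},\\ &c^y_i+\tfrac12\ell^y_i\le c^y_j-\tfrac12\ell^y_j+L^y(w_1+w_2),\\ &c^x_i+\tfrac12\ell^x_i\le c^x_j-\tfrac12\ell^x_j+L^x(1-w_1+w_2),\\ &c^y_j+\tfrac12\ell^y_j\le c^y_i-\tfrac12\ell^y_i+L^y(2-w_1-w_2),\\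 &c^x_j+\tfrac12\ell^x_j\le c^x_i-\tfrac12\ell^x_i+L^x(1+w_1-w_2),\\ &w\in\{0,1\}^2. \end{align*}
   Context: Box $\mathscr{B}_p$ precedes box $\mathscr{B}_q$ in direction $s\in\{x,y\}$, written $\mathscr{B}_p\leftarrow_s\mathscr{B}_q$, if $c^s_p+\tfrac12\ell^s_p\le c^s_q-\tfrac12\ell^s_q$. $E$ is the embedding $\operatorname{Em}(Q^{lb},D^4,GB^4)$ of the four-branch non-overlap disjunction with the two-bit Gray encoding. *)

(* the statement is purely order-theoretic over the reals,
   stated for an arbitrary real field R (includes the real numbers). *)
From HB Require Import structures.
From mathcomp Require Import all_boot all_order all_algebra.
Set Implicit Arguments. Unset Strict Implicit. Unset Printing Implicit Defensive.
Import Order.TTheory GRing.Theory Num.Theory.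
Local Open Scope ring_scope.

Inductive dir := DX | DY.

Record box (R : realFieldType) := Box { bcx : R; bcy : R; blx : R; bly : R }.

Definition cen (R : realFieldType) (s : dir) (b : box R) : R :=
  match s with DX => bcx b | DY => bcy b end.
Definition len (R : realFieldType) (s : dir) (b : box R) : R :=
  match s with DX => blx b | DY => bly b end.

Definition precedes (R : realFieldType) (s : dir) (p q : box R) : Prop :=
  cen s p + len s p / 2%:R <= cen s q - len s q / 2%:R.

Definition box_in_Qlb (R : realFieldType) (L lb : dir -> R) (b : box R) : Prop :=
  forall s : dir,
    len s b / 2%:R <= cen s b /\ cen s b <= L s - len s b / 2%:R /\ lb s <= len s b.

Definition in_Qlb (R : realFieldType) (L lbi lbj : dir -> R) (bi bj : box R) : Prop :=
  box_in_Qlb L lbi bi /\ box_in_Qlb L lbj bj.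

Definition is01 (R : realFieldType) (w : R) : Prop := w = 0 \/ w = 1.

(* Membership in E (the four-branch non-overlap disjunction with the Gray encoding). *)
Definition in_E (R : realFieldType) (L lbi lbj : dir -> R) (bi bj : box R) (w1 w2 : R) : Prop :=
  (is01 w1 /\ is01 w2) /\ in_Qlb L lbi lbj bi bj /\
      (w1 = 0 /\ w2 = 0 -> precedes DY bi bj) /\
      (w1 = 1 /\ w2 = 0 -> precedes DX bi bj) /\
      (w1 = 1 /\ w2 = 1 -> precedes DY bj bi) /\
      (w1 = 0 /\ w2 = 1 -> precedes DX bj bi).

Definition in_Em (R : realFieldType) (L lbi lbj : dir -> R) (bi bj : box R) (w1 w2 : R) : Prop :=
  (box_in_Qlb L lbi bi /\ box_in_Qlb L lbj bj) /\
      bcy bi + bly bi / 2%:R <= bcy bj - bly bj / 2%:R + L DY * (w1 + w2) /\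
      bcx bi + blx bi / 2%:R <= bcx bj - blx bj / 2%:R + L DX * (1 - w1 + w2) /\
      bcy bj + bly bj / 2%:R <= bcy bi - bly bi / 2%:R + L DY * (2%:R - w1 - w2) /\
      bcx bj + blx bj / 2%:R <= bcx bi - blx bi / 2%:R + L DX * (1 + w1 - w2) /\
      (is01 w1 /\ is01 w2).

(* Each constraint of the embedding is a big-M relaxation of one precedence
   B_p <-_s B_q, with multiplier L^s times an affine form of (w1, w2).  On the
   four Gray codewords exactly one of these forms vanishes, recovering the
   selected precedence, while the others are at least 1; and inside the
   container any two boxes satisfy c^s_p + l^s_p/2 <= L^s <= c^s_q - l^s_q/2 + L^s,
   so a relaxed constraint with multiplier at least L^s holds automatically. *)
From HB Require Import structures.
From mathcomp Require Import all_boot all_order all_algebra.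
From mathcomp Require Import lra.
Set Implicit Arguments. Unset Strict Implicit. Unset Printing Implicit Defensive.
Import Order.TTheory GRing.Theory Num.Theory.
Local Open Scope ring_scope.

Section BigMPrecedence.
Variable R : realFieldType.
Implicit Types (L lb : dir -> R) (s : dir) (p q : box R) (c k : R).

Definition precedes_within s (M : R) p q : Prop :=
  cen s p + len s p / 2%:R <= cen s q - len s q / 2%:R + M.

Lemma precedes_within0 s p q c k :
  k = 0 -> precedes_within s (c * k) p q <-> precedes s p q.
Proof. by move->; rewrite /precedes_within mulr0 addr0. Qed.

Lemma box_in_Qlb_le_far {L lb p} s :
  box_in_Qlb L lb p -> cen s p + len s p / 2%:R <= L s.
Proof. by case/(_ s) => _ [+ _]; lra. Qed.

Lemma box_in_Qlb_ge_near {L lb q} s :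
  box_in_Qlb L lb q -> 0 <= cen s q - len s q / 2%:R.
Proof. by case/(_ s) => + _; lra. Qed.

Lemma precedes_within_Qlb L lbp lbq p q s k :
  box_in_Qlb L lbp p -> box_in_Qlb L lbq q -> 0 <= L s -> 1 <= k ->
  precedes_within s (L s * k) p q.
Proof.
move=> /(box_in_Qlb_le_far s) far_p /(box_in_Qlb_ge_near s) near_q L_ge0 k_ge1.
have : L s <= L s * k by exact: ler_peMr.
rewrite /precedes_within; lra.
Qed.

End BigMPrecedence.

Lemma in_EmE (R : realFieldType) (L lbi lbj : dir -> R) (bi bj : box R) (w1 w2 : R) :
  in_Em L lbi lbj bi bj w1 w2 <->
  [/\ in_Qlb L lbi lbj bi bj,
      [/\ precedes_within DY (L DY * (w1 + w2)) bi bj,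
          precedes_within DX (L DX * (1 - w1 + w2)) bi bj,
          precedes_within DY (L DY * (2%:R - w1 - w2)) bj bi &
          precedes_within DX (L DX * (1 + w1 - w2)) bj bi]
    & is01 w1 /\ is01 w2].
Proof. by split=> [[? [? [? [? [? ?]]]]] | [? [? ? ? ?] ?]]. Qed.

Lemma in_E_in_Em (R : realFieldType) (L lbi lbj : dir -> R) (bi bj : box R) (w1 w2 : R) :
  (forall s, 0 <= L s) ->
  in_E L lbi lbj bi bj w1 w2 -> in_Em L lbi lbj bi bj w1 w2.
Proof.
move=> L_ge0 [w01 [[Qi Qj] [P00 [P10 [P11 P01]]]]]; apply/in_EmE.
split=> //; split; case: w01 => -[] E1 -[] E2; subst w1 w2.
all: try (apply/precedes_within0; first lra).
all: try by [apply: P00 | apply: P10 | apply: P11 | apply: P01].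
all: apply: precedes_within_Qlb => //; lra.
Qed.

Lemma in_Em_in_E (R : realFieldType) (L lbi lbj : dir -> R) (bi bj : box R) (w1 w2 : R) :
  in_Em L lbi lbj bi bj w1 w2 -> in_E L lbi lbj bi bj w1 w2.
Proof.
case/in_EmE=> Q [sy sx sy' sx'] w01; do 2!split=> //.
split; [|split; [|split]] => -[E1 E2];
  [ move: sy | move: sx | move: sy' | move: sx' ];
  apply: iffLR; apply: precedes_within0; lra.
Qed.

Theorem proposition5p2 (R : realFieldType) (L lbi lbj : dir -> R)
  (hL : forall s, 0 < L s) (hlbi : forall s, 0 < lbi s) (hlbj : forall s, 0 < lbj s)
  (bi bj : box R) (w1 w2 : R) :
  in_E L lbi lbj bi bj w1 w2 <-> in_Em L lbi lbj bi bj w1 w2.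
Proof.
split; first by apply: in_E_in_Em => s; exact/ltW.
exact: in_Em_in_E.
Qed.
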